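(* Under the hypotheses of the preceding setting (regular minimal exponential family with log-partition $T$, agent with exponential utility coefficient $a>0$ and belief $p(\cdot;\hat\theta)$, $\hat\theta\in\Theta$), suppose the market maker uses the liquidity-adjusted cost $C_\lambda(\theta)=\frac1\lambda T(\lambda\theta)$ with inverse liquidity $\lambda>0$, and the current state is $\theta$ with $\lambda\theta\in\Theta$ and prices $\mu=\nabla C_\lambda(\theta)$. Let $\hat\mu=\nabla T(\hat\theta)$ and $\tilde\theta=\hat\theta/\lambda$ (so $\nabla C_\lambda(\tilde\theta)=\hat\mu$). Then the agent's unique expected-utility-maximizing trade $\delta$ moves the state to $$\theta+\delta=\frac{\lambda}{\lambda+a}\tilde\theta+\frac{a}{\lambda+a}\theta=\frac{\lambda}{\lambda+a}(\nabla C_\lambda)^{-1}(\hat\mu)+\frac{a}{\lambda+a}(\nabla C_\lambda)^{-1}(\mu).$$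
   Context: Exponential family with sufficient statistic $\phi:\mathcal{X}\to\mathbb{R}^d$ and base measure $\nu$: $p(x;\theta)=\exp(\langle\theta,\phi(x)\rangle-T(\theta))$, $T(\theta)=\log\int_{\mathcal{X}}\exp\langle\theta,\phi(x)\rangle\,d\nu(x)$, $\Theta=\{\theta:T(\theta)<\infty\}$ open, $\phi$ minimal. Exponential utility: $U_a(w)=-\frac1a e^{-aw}$. In a cost-function market with cost $C$, buying portfolio $\delta$ at state $\theta$ costs $C(\theta+\delta)-C(\theta)$, moves the state to $\theta+\delta$, and pays $\langle\delta,\phi(x)\rangle$ when outcome $x$ occurs. *)

From HB Require Import structures.
From mathcomp Require Import all_boot all_order all_algebra.
From mathcomp Require Import all_classical all_reals all_analysis.
Set Implicit Arguments. Unset Strict Implicit. Unset Printing Implicit Defensive.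
Import Order.TTheory GRing.Theory Num.Theory.
Import numFieldNormedType.Exports.
Local Open Scope classical_set_scope.
Local Open Scope ring_scope.

Section ExpFam.
Context {R : realType} {d : nat} {dX : measure_display} {X : measurableType dX}.
Variable nu : {measure set X -> \bar R}.
Variable phi : X -> 'rV[R]_d.

Definition dotv (u v : 'rV[R]_d) : R := \sum_(i < d) u ord0 i * v ord0 i.

Definition partition_int (th : 'rV[R]_d) : \bar R :=
  (\int[nu]_x (expR (dotv th (phi x)))%:E)%E.

Definition natparam : set 'rV[R]_d := [set th | (partition_int th < +oo)%E].

(* log-partition function T (meaningful on natparam) *)
Definition logpart (th : 'rV[R]_d) : R := ln (fine (partition_int th)).

Definition expfam_density (th : 'rV[R]_d) (x : X) : R :=
  expR (dotv th (phi x) - logpart th).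

Definition minimal_stat : Prop :=
  forall v : 'rV[R]_d, (exists c : R, {ae nu, forall x, dotv v (phi x) = c}) -> v = 0.

Definition lmsr_cost (lam : R) (th : 'rV[R]_d) : R := logpart (lam *: th) / lam.

Definition exp_utility (a w : R) : R := - a^-1 * expR (- a * w).

Definition expected_utility (a lam : R) (thhat th delta : 'rV[R]_d) : \bar R :=
  (\int[nu]_x (exp_utility a (dotv delta (phi x)
        - (lmsr_cost lam (th + delta) - lmsr_cost lam th))
      * expfam_density thhat x)%:E)%E.

Definition feasible_trade (lam : R) (th delta : 'rV[R]_d) : Prop :=
  natparam (lam *: (th + delta)).

Definition optimal_trade (a lam : R) (thhat th delta : 'rV[R]_d) : Prop :=
  feasible_trade lam th delta /\
  forall delta', feasible_trade lam th delta' ->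
    (expected_utility a lam thhat th delta' <= expected_utility a lam thhat th delta)%E.

End ExpFam.

From HB Require Import structures.
From mathcomp Require Import all_boot all_order all_algebra.
From mathcomp Require Import all_classical all_reals all_analysis.
From mathcomp Require Import measurable_realfun ring lra.
Set Implicit Arguments.
Unset Strict Implicit.
Unset Printing Implicit Defensive.
Import Order.TTheory GRing.Theory Num.Theory.
Import numFieldNormedType.Exports.
Local Open Scope classical_set_scope.
Local Open Scope ring_scope.

(* Under the belief p(.; thhat), buying delta at state th has expected utility
   -(1/a) exp(a (C(th + delta) - C(th)) - T(thhat)) Z(thhat - a delta), so the
   agent minimises a C(th + delta) + T(thhat - a delta) = (a/lam) T(u) + T(v)
   with u = lam (th + delta) and v = thhat - a delta.  The combination
   (a u + lam v) / (lam + a) = lam (thhat + a th) / (lam + a) does not depend on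
   delta, so by convexity of T the loss is at least its value at u = v; Hoelder's
   inequality is strict unless u = v because phi is minimal, and u = v is
   exactly the announced state. *)

Lemma expR_tangent_leif (R : realType) (x : R) : 1 + x <= expR x ?= iff (x == 0).
Proof.
apply/leifP; have [->|/expR_gt1Dx //] := eqVneq x 0.
by rewrite addr0 expR0.
Qed.

Lemma expR_convex_leif (R : realType) (q p A B : R) :
  0 < q -> 0 < p -> q + p = 1 ->
  expR (q * A + p * B) <= q * expR A + p * expR B ?= iff (A == B).
Proof.
move=> q_gt0 p_gt0 qp1; set m := q * A + p * B.
have tangent x : expR m * (1 + (x - m)) <= expR x ?= iff (x == m).
  have -> : expR x = expR m * expR (x - m) by rewrite -expRD addrC subrK.
  by rewrite (mono_leif (ler_pM2l (expR_gt0 m))) -subr_eq0; exact: expR_tangent_leif.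
have tA := tangent A; rewrite -(mono_leif (ler_pM2l q_gt0)) in tA.
have tB := tangent B; rewrite -(mono_leif (ler_pM2l p_gt0)) in tB.
have -> : expR m = q * (expR m * (1 + (A - m))) + p * (expR m * (1 + (B - m))).
  rewrite /m; have -> : q = 1 - p by rewrite -qp1 addrK.
  ring.
rewrite -(_ : (A == m) && (B == m) = (A == B)); first exact: leifD tA tB.
apply/andP/eqP => [[/eqP-> /eqP->] // | AB].
by rewrite /m -AB -mulrDl qp1 mul1r eqxx.
Qed.

Lemma ge0_integral_eq0_ae {dT : measure_display} {T : measurableType dT}
    {R : realType} {mu : {measure set T -> \bar R}} {f : T -> \bar R} :
  measurable_fun setT f -> (forall x, (0 <= f x)%E) ->
  (\int[mu]_x f x = 0)%E -> f = cst 0%E %[ae mu].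
Proof.
move=> mf f_ge0 intf0; apply/(ae_eq_integral_abs mu measurableT mf).
by rewrite -intf0; apply: eq_integral => x _; rewrite gee0_abs.
Qed.

Section DotProduct.
Context {R : realType} {d : nat}.
Implicit Types u v y : 'rV[R]_d.

Lemma dotvD u v y : dotv (u + v) y = dotv u y + dotv v y.
Proof. by rewrite /dotv -big_split; apply: eq_bigr => i _; rewrite !mxE mulrDl. Qed.

Lemma dotvZ k u y : dotv (k *: u) y = k * dotv u y.
Proof. by rewrite /dotv mulr_sumr; apply: eq_bigr => i _; rewrite !mxE mulrA. Qed.

Lemma dotvB u v y : dotv (u - v) y = dotv u y - dotv v y.
Proof. by rewrite dotvD -scaleN1r dotvZ mulN1r. Qed.

End DotProduct.

Section ExpFamily.
Context {R : realType} {d : nat} {dX : measure_display} {X : measurableType dX}.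
Variables (nu : {measure set X -> \bar R}) (phi : X -> 'rV[R]_d).
Hypothesis phi_meas : forall i : 'I_d, measurable_fun setT (fun x => phi x ord0 i).
Hypothesis nu_pos : (0 < nu setT)%E.

Local Notation Z := (partition_int nu phi).
Local Notation T := (logpart nu phi).
Local Notation Theta := (natparam nu phi).

Lemma measurable_dotv th : measurable_fun setT (fun x => dotv th (phi x)).
Proof.
apply: measurable_sum => i.
by apply: measurable_funM => //; exact: measurable_cst.
Qed.

Lemma measurable_expR_dotv th : measurable_fun setT (fun x => expR (dotv th (phi x))).
Proof. by apply: measurableT_comp => //; exact: measurable_dotv. Qed.

Lemma partition_int_gt0 th : (0 < Z th)%E.
Proof.
rewrite lt0e integral_ge0 ?andbT; last by move=> x _; rewrite lee_fin expR_ge0.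
have /measurable_EFinP mexp := measurable_expR_dotv th.
apply/eqP => /(ge0_integral_eq0_ae mexp) exp_ae0.
have PF := ae_properfilter_algebraOfSetsType nu_pos.
have /filter_ex [x /(_ I) /eqP] := exp_ae0 (fun x => expR_ge0 _).
by rewrite eqe gt_eqF ?expR_gt0.
Qed.

Lemma partition_intE th : Theta th -> Z th = (expR (T th))%:E.
Proof.
move=> th_in; have Z_gt0 := partition_int_gt0 th.
rewrite /logpart lnK ?fineK ?ge0_fin_numE ?ltW //.
by rewrite posrE fine_gt0 // Z_gt0.
Qed.

Lemma partition_int_pinfty th : ~ Theta th -> Z th = +oo%E.
Proof.
move: (partition_int_gt0 th); rewrite /natparam /=.
by case: (Z th) => // r _ []; exact: ltry.
Qed.

Lemma partition_intZ c th : 0 <= c ->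
  (\int[nu]_x (c * expR (dotv th (phi x)))%:E = c%:E * Z th)%E.
Proof.
move=> c_ge0; under eq_integral => x _ do rewrite EFinM.
apply: ge0_integralZl_EFin => //; exact/measurable_EFinP/measurable_expR_dotv.
Qed.

Lemma expfam_densityE th x :
  expfam_density nu phi th x = expR (- T th) * expR (dotv th (phi x)).
Proof. by rewrite /expfam_density addrC expRD. Qed.

Section LogpartConvex.
Variables (q p : R) (u v : 'rV[R]_d).
Hypotheses (q_gt0 : 0 < q) (p_gt0 : 0 < p) (qp1 : q + p = 1).
Hypotheses (u_in : Theta u) (v_in : Theta v).

Let w := q *: u + p *: v.
Let Tuv := q * T u + p * T v.
(* [geo x] is the weighted geometric mean of the densities of [u] and [v] and
   [mix x] their mixture; integrating [geo <= mix] is Hoelder's inequality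
   [Z w <= Z u ^ q * Z v ^ p]. *)
Let mix x := q * expfam_density nu phi u x + p * expfam_density nu phi v x.
Let geo x := expR (- Tuv) * expR (dotv w (phi x)).

Let geo_le_mix x :
  geo x <= mix x ?= iff (dotv u (phi x) - T u == dotv v (phi x) - T v).
Proof.
rewrite /geo /mix /expfam_density /w /Tuv dotvD !dotvZ -expRD.
(* Abstracting these atoms keeps rewriting from unfolding the integrals behind them. *)
move: (dotv u (phi x)) (dotv v (phi x)) (T u) (T v) => du dv Tu Tv.
suff -> : - (q * Tu + p * Tv) + (q * du + p * dv) = q * (du - Tu) + p * (dv - Tv).
  exact: expR_convex_leif.
by ring.
Qed.

Let measurable_geo : measurable_fun setT geo.
Proof. by apply: measurable_funM => //; exact: measurable_expR_dotv. Qed.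

Let measurable_mix : measurable_fun setT mix.
Proof.
have mdens th : measurable_fun setT (expfam_density nu phi th).
  by apply: measurableT_comp => //; apply: measurable_funB => //; exact: measurable_dotv.
by apply: measurable_funD; apply: measurable_funM.
Qed.

Let integral_geo : (\int[nu]_x (geo x)%:E = (expR (- Tuv))%:E * Z w)%E.
Proof. by rewrite partition_intZ ?expR_ge0. Qed.

Let integral_mix : (\int[nu]_x (mix x)%:E = 1)%E.
Proof.
have mixE x : (mix x)%:E = ((q * expR (- T u)) * expR (dotv u (phi x)))%:E
                         + ((p * expR (- T v)) * expR (dotv v (phi x)))%:E.
  by rewrite /mix !expfam_densityE EFinD (mulrA q) (mulrA p).
have mscaled c th : measurable_fun setT (fun x => (c * expR (dotv th (phi x)))%:E).
  by apply/measurable_EFinP/measurable_funM => //; exact: measurable_expR_dotv.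
have qTu_ge0 : 0 <= q * expR (- T u) by rewrite mulr_ge0 ?expR_ge0 ?ltW.
have pTv_ge0 : 0 <= p * expR (- T v) by rewrite mulr_ge0 ?expR_ge0 ?ltW.
under eq_integral => x _ do rewrite mixE.
rewrite ge0_integralD //; last 2 first.
- by move=> x _; rewrite lee_fin; exact: mulr_ge0 qTu_ge0 (expR_ge0 _).
- by move=> x _; rewrite lee_fin; exact: mulr_ge0 pTv_ge0 (expR_ge0 _).
rewrite (partition_intZ u qTu_ge0) (partition_intZ v pTv_ge0) !partition_intE //.
move: (T u) (T v) => Tu Tv.
by rewrite -!EFinM -EFinD -!mulrA -!expRD !addNr !expR0 !mulr1 qp1.
Qed.

Let partition_int_convex_le : (Z w <= (expR Tuv)%:E)%E.
Proof.
have : (\int[nu]_x (geo x)%:E <= \int[nu]_x (mix x)%:E)%E.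
  apply: ge0_le_integral => //.
  - by move=> x _; rewrite lee_fin mulr_ge0 ?expR_ge0.
  - exact/measurable_EFinP.
  - exact/measurable_EFinP.
  - by move=> x _; rewrite lee_fin (geo_le_mix x).1.
rewrite integral_geo integral_mix.
case: (Z w) (partition_int_gt0 w) => [z _| _ |//].
- rewrite -EFinM !lee_fin => le1.
  have -> : z = expR Tuv * (expR (- Tuv) * z) by rewrite mulrA -expRD subrr expR0 mul1r.
  by rewrite -[leRHS]mulr1 ler_pM2l // expR_gt0.
- by rewrite gt0_muley // lte_fin expR_gt0.
Qed.

Lemma natparam_convex : Theta w.
Proof. exact: le_lt_trans partition_int_convex_le (ltry _). Qed.

Lemma logpart_convex : T w <= Tuv.
Proof.
by have := partition_int_convex_le; rewrite (partition_intE natparam_convex) lee_fin ler_expR.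
Qed.

Lemma logpart_convex_eq : minimal_stat nu phi -> T w = Tuv -> u = v.
Proof.
move=> phi_min Tw_eq.
have integral_geo1 : (\int[nu]_x (geo x)%:E = 1)%E.
  by rewrite integral_geo (partition_intE natparam_convex) Tw_eq -EFinM -expRD addNr expR0.
have gap_ge0 x : (0 <= (mix x - geo x)%:E)%E.
  by rewrite lee_fin subr_ge0 (geo_le_mix x).1.
have mgap : measurable_fun setT (fun x => (mix x - geo x)%:E).
  by apply/measurable_EFinP; exact: measurable_funB.
have integral_gap0 : (\int[nu]_x (mix x - geo x)%:E = 0)%E.
  have := integral_mix.
  under eq_integral => x _ do rewrite -[mix x](subrK (geo x)) EFinD.
  rewrite ge0_integralD //; last 2 first.
  - by move=> x _; rewrite lee_fin mulr_ge0 ?expR_ge0.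
  - exact/measurable_EFinP.
  rewrite integral_geo1.
  move: (integral_ge0 nu (fun x (_ : [set: X] x) => gap_ge0 x)).
  case: (\int[nu]_x (mix x - geo x)%:E)%E => [r _||//].
  - by rewrite -EFinD => -[] /eqP; rewrite -subr_eq0 addrK => /eqP ->.
  - by [].
have gap_ae := ge0_integral_eq0_ae mgap gap_ge0 integral_gap0.
apply/eqP; rewrite -subr_eq0; apply/eqP/phi_min.
exists (T u - T v); apply: filterS gap_ae => x /(_ I) /eqP.
rewrite eqe subr_eq0 eq_sym (eq_leif (geo_le_mix x)) dotvB => /eqP.
move: (dotv u (phi x)) (dotv v (phi x)) (T u) (T v) => du dv Tu Tv.
lra.
Qed.

Lemma logpart_convex_leif : minimal_stat nu phi -> T w <= Tuv ?= iff (u == v).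
Proof.
move=> phi_min; split; first exact: logpart_convex.
apply/eqP/eqP => [|uv]; first exact: logpart_convex_eq.
by rewrite /w /Tuv uv -scalerDl -mulrDl qp1 scale1r mul1r.
Qed.

End LogpartConvex.

Section Trade.
Variables (a lam : R) (thhat th : 'rV[R]_d).
Hypotheses (a_gt0 : 0 < a) (lam_gt0 : 0 < lam).

Local Notation C := (lmsr_cost nu phi lam).
Local Notation EU := (expected_utility nu phi a lam thhat th).

Let trade_loss delta := a * C (th + delta) + T (thhat - a *: delta).

Lemma expected_utilityE delta :
  EU delta = (- ((a^-1 * expR (a * (C (th + delta) - C th) - T thhat))%:E
                 * Z (thhat - a *: delta)))%E.
Proof.
set c := a^-1 * _.
have c_ge0 : 0 <= c by apply: mulr_ge0 (expR_ge0 _); rewrite invr_ge0 ltW.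
rewrite -partition_intZ // -integral_ge0N; last first.
  by move=> x _; rewrite lee_fin; exact: mulr_ge0 c_ge0 (expR_ge0 _).
apply: eq_integral => x _; rewrite -EFinN; congr EFin.
rewrite /exp_utility /expfam_density /c dotvB dotvZ.
move: (dotv delta (phi x)) (dotv thhat (phi x)) (C (th + delta) - C th) (T thhat).
move=> dd dh k Th.
by rewrite !mulNr -!mulrA -!expRD; congr (- (_ * expR _)); ring.
Qed.

Lemma expected_utility_natparam delta : Theta (thhat - a *: delta) ->
  EU delta = (- (a^-1 * expR (trade_loss delta - (a * C th + T thhat))))%:E.
Proof.
move=> v_in; rewrite expected_utilityE (partition_intE v_in) -EFinM -EFinN /trade_loss.
move: (C (th + delta)) (C th) (T thhat) (T (thhat - a *: delta)) => Cd C0 Th Tv.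
by rewrite -mulrA -expRD; congr (- (_ * expR _))%:E; ring.
Qed.

Lemma expected_utility_pinfty delta : ~ Theta (thhat - a *: delta) -> EU delta = -oo%E.
Proof.
move=> v_out; rewrite expected_utilityE (partition_int_pinfty v_out) gt0_muley //.
by rewrite lte_fin; apply: mulr_gt0 (expR_gt0 _); rewrite invr_gt0.
Qed.

Lemma expected_utility_le delta delta' :
  Theta (thhat - a *: delta) -> Theta (thhat - a *: delta') ->
  (EU delta' <= EU delta)%E = (trade_loss delta <= trade_loss delta').
Proof.
move=> v_in v'_in; rewrite !expected_utility_natparam // lee_fin lerN2.
by rewrite ler_pM2l ?invr_gt0 // ler_expR lerD2r.
Qed.

Hypothesis phi_min : minimal_stat nu phi.
Hypotheses (thhat_in : Theta thhat) (th_in : Theta (lam *: th)).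

Let s := (lam / (lam + a)) *: (lam^-1 *: thhat) + (a / (lam + a)) *: th.
Let w := (lam / (lam + a)) *: (thhat + a *: th).

Let lam_neq0 : lam != 0. Proof. exact: lt0r_neq0. Qed.
Let lama_neq0 : lam + a != 0. Proof. by rewrite lt0r_neq0 // addr_gt0. Qed.
Let q_gt0 : 0 < a / (lam + a). Proof. by rewrite divr_gt0 // addr_gt0. Qed.
Let p_gt0 : 0 < lam / (lam + a). Proof. by rewrite divr_gt0 // addr_gt0. Qed.
Let qp1 : a / (lam + a) + lam / (lam + a) = 1. Proof. by rewrite -mulrDl addrC divff. Qed.

Let mix_states delta :
  (a / (lam + a)) *: (lam *: (th + delta)) + (lam / (lam + a)) *: (thhat - a *: delta) = w.
Proof. by apply/rowP => i; rewrite !mxE; field. Qed.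

Let scale_s : lam *: s = w.
Proof. by apply/rowP => i; rewrite !mxE; field; rewrite lama_neq0 lam_neq0. Qed.

Let thhat_s : thhat - a *: (s - th) = w.
Proof. by apply/rowP => i; rewrite !mxE; field; rewrite lama_neq0 lam_neq0. Qed.

Let state_balance delta : (lam *: (th + delta) == thhat - a *: delta) = (th + delta == s).
Proof.
apply/eqP/eqP => [/rowP balance|e].
  apply/rowP => i; move: (balance i); rewrite !mxE => balance_i.
  have -> : thhat 0 i = lam * (th 0 i + delta 0 i) + a * delta 0 i.
    by rewrite balance_i subrK.
  by field; rewrite lama_neq0 lam_neq0.
have -> : delta = s - th by rewrite -e addrC addKr.
by rewrite addrC subrK scale_s thhat_s.
Qed.

Lemma trade_loss_leif delta :
  Theta (lam *: (th + delta)) -> Theta (thhat - a *: delta) ->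
  trade_loss (s - th) <= trade_loss delta ?= iff (th + delta == s).
Proof.
move=> u_in v_in.
have := logpart_convex_leif q_gt0 p_gt0 qp1 u_in v_in phi_min.
rewrite mix_states state_balance.
have k_gt0 : 0 < (lam + a) / lam by rewrite divr_gt0 // addr_gt0.
rewrite -(mono_leif (ler_pM2l k_gt0)) /=.
have -> : trade_loss (s - th) = (lam + a) / lam * T w.
  rewrite /trade_loss /lmsr_cost (addrC th) subrK scale_s thhat_s.
  by move: (T w) => Tw; field.
suff -> : trade_loss delta = (lam + a) / lam *
    (a / (lam + a) * T (lam *: (th + delta)) + lam / (lam + a) * T (thhat - a *: delta)).
  by [].
rewrite /trade_loss /lmsr_cost.
by move: (T (lam *: _)) (T (thhat - _)) => Tu Tv; field; rewrite lama_neq0 lam_neq0.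
Qed.

Lemma optimal_tradeP delta :
  optimal_trade nu phi a lam thhat th delta <-> th + delta = s.
Proof.
have w_in : Theta w.
  by rewrite -(mix_states 0) addr0 scaler0 subr0; exact: natparam_convex.
have s_feasible : feasible_trade nu phi lam th (s - th).
  by rewrite /feasible_trade (addrC th) subrK scale_s.
have s_v_in : Theta (thhat - a *: (s - th)) by rewrite thhat_s.
split.
  move=> [feasible optimal].
  have v_in : Theta (thhat - a *: delta).
    apply: contrapT => v_out; have := optimal _ s_feasible.
    by rewrite (expected_utility_pinfty v_out) (expected_utility_natparam s_v_in) leeNy_eq.
  apply/eqP; rewrite -(ge_leif (trade_loss_leif feasible v_in)).
  by rewrite -(expected_utility_le v_in s_v_in); exact: optimal.
move=> e; have -> : delta = s - th by rewrite -e addrC addKr.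
split=> [|delta' feasible']; first exact: s_feasible.
have [v_in|v_out] := pselect (Theta (thhat - a *: delta')).
  by rewrite (expected_utility_le s_v_in v_in); exact: (trade_loss_leif feasible' v_in).1.
by rewrite (expected_utility_pinfty v_out) leNye.
Qed.

End Trade.
End ExpFamily.

Theorem corollary4 (R : realType) (d : nat) (dX : measure_display)
    (X : measurableType dX) (nu : {measure set X -> \bar R})
    (phi : X -> 'rV[R]_d)
    (phi_meas : forall i : 'I_d, measurable_fun setT (fun x => phi x ord0 i))
    (nu_pos : (0 < nu setT)%E)
    (Theta_open : open (natparam nu phi))
    (phi_min : minimal_stat nu phi)
    (a lam : R) (a_pos : 0 < a) (lam_pos : 0 < lam)
    (thhat th : 'rV[R]_d)
    (thhat_in : natparam nu phi thhat)
    (th_in : natparam nu phi (lam *: th)) :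
  forall delta : 'rV[R]_d,
    optimal_trade nu phi a lam thhat th delta <->
    th + delta = (lam / (lam + a)) *: (lam^-1 *: thhat) + (a / (lam + a)) *: th.
Proof.
exact (optimal_tradeP phi_meas nu_pos a_pos lam_pos phi_min thhat_in th_in).
Qed.
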